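(* Let $\Omega\subset\mathbb{R}^2$ be a bounded domain, $X\subset\overline{\Omega}$ finite with $X\setminus\partial\Omega\subset\mathrm{int}(\mathrm{conv}(X\cap\partial\Omega))$, $f_X$ a discrete load on $X$, $E_0,V_0>0$, and assume $\mathcal{Z}_X>0$. Let $(\mathbf{s},\mathbf{q},\mathbf{r})\in\mathbb{R}^{3\times m}$ solve $(\mathcal{P}_X)$ and $(\mathbf{u}_1,\mathbf{u}_2,\mathbf{w})\in\mathbb{R}^{3\times n}$ (with some slack vectors) solve $(\mathcal{P}_X^* )$. Then the pair $$\mathbf{z}=\tfrac12\mathbf{w},\qquad\mathbf{a}=\frac{V_0}{\mathcal{Z}_X}\mathbf{J}(\mathbf{z})\mathbf{s}$$ solves $(\mathrm{MCGS}_X)$ with $\mathcal{C}_{X,\min}=\frac{(\mathcal{Z}_X)^2}{2E_0V_0}$. Moreover, the vectors $$(\mathbf{u}_{1,el},\mathbf{u}_{2,el},\mathbf{w}_{el})=\frac{\mathcal{Z}_X}{E_0V_0}(\mathbf{u}_1,\mathbf{u}_2,\mathbf{w}),\qquad\hat{\mathbf{s}}=\mathbf{J}(\mathbf{z})\mathbf{s}$$ solve, respectively, the displacement-based problem defining $\mathcal{C}_X(\mathbf{z},\mathbf{a})$ and the stress-based problem for $(\mathbf{z},\mathbf{a})$. Each bar with $a_k\ne0$ undergoes the strain $\hat{\mathrm{e}}_k(\mathbf{u}_{1,el},\mathbf{u}_{2,el},\mathbf{w}_{el};\mathbf{z})=\mathcal{Z}_X/(E_0V_0)$, and for every bar $k$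 Hooke's law holds: $\hat s_k=(E_0a_k)\,\hat{\mathrm{e}}_k(\mathbf{u}_{1,el},\mathbf{u}_{2,el},\mathbf{w}_{el};\mathbf{z})$.
   Context: Discrete setting: $\bar n=\#X$, $n=\#(X\setminus\partial\Omega)$, enumeration $\chi:\{1,\dots,n\}\to X\setminus\partial\Omega$; $m=\bar n(\bar n-1)/2$, enumeration $k\mapsto\{\chi_-(k),\chi_+(k)\}$ of unordered pairs of distinct points of $X$. $f_i=f_X(\{\chi(i)\})$, $l_k=|\chi_+(k)-\chi_-(k)|$. Vectors in $\mathbb{R}^n$ are identified with functions on $X$ vanishing on $X\cap\partial\Omega$. $(\mathbf{B}_1\mathbf{u}_1+\mathbf{B}_2\mathbf{u}_2)_k=(u(\chi_+(k))-u(\chi_-(k)))\cdot(\chi_+(k)-\chi_-(k))/l_k$, $(\mathbf{D}\mathbf{w})_k=w(\chi_+(k))-w(\chi_-(k))$. $\mathrm{K}=\{(t_1,t_2,t_3):t_1,t_2\ge0,2t_1t_2\ge t_3^2\}$. $(\mathcal{P}_X)$: $\inf\{\mathbf{l}^\top\mathbf{s}+2\mathbf{l}^\top\mathbf{r}:\mathbf{s},\mathbf{r}\in\mathbb{R}^m_+,\mathbf{q}\in\mathbb{R}^m,\mathbf{B}_1^\top\mathbf{s}=\mathbf{B}_2^\top\mathbf{s}=\mathbf{0},\mathbf{D}^\top\mathbf{q}=\mathbf{f},(r_k,s_k,q_k)\in\mathrm{K}\ \forall k\}$; $(\mathcal{P}_X^* )$: $\sup\{\mathbf{f}^\top\mathbf{w}:\mathbf{t}_2+\mathbf{B}_1\mathbf{u}_1+\mathbf{B}_2\mathbf{u}_2=\mathbf{l},\mathbf{t}_3+\mathbf{D}\mathbf{w}=\mathbf{0},\mathbf{t}_1=2\mathbf{l},(t_{1;k},t_{2;k},t_{3;k})\in\mathrm{K}\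 \forall k\}$ over $\mathbf{u}_1,\mathbf{u}_2,\mathbf{w}\in\mathbb{R}^n$, $\mathbf{t}_1,\mathbf{t}_2\in\mathbb{R}^m_+$, $\mathbf{t}_3\in\mathbb{R}^m$; it is known $\min\mathcal{P}_X=\max\mathcal{P}_X^*=:\mathcal{Z}_X$. For $\mathbf{z}\in\mathbb{R}^n$: $\Delta_k(\mathbf{z})=(\mathbf{D}\mathbf{z})_k/l_k$, $\mathbf{J}(\mathbf{z})$ diagonal with $J_{kk}(\mathbf{z})=\sqrt{1+\Delta_k(\mathbf{z})^2}$, $\hat l_k(\mathbf{z})=J_{kk}(\mathbf{z})l_k$; $\mathrm{e}_k(\mathbf{u}_1,\mathbf{u}_2)=(\mathbf{B}_1\mathbf{u}_1+\mathbf{B}_2\mathbf{u}_2)_k/l_k$; $\hat{\mathrm{e}}_k(\mathbf{u}_1,\mathbf{u}_2,\mathbf{w};\mathbf{z})=(\mathrm{e}_k(\mathbf{u}_1,\mathbf{u}_2)+\Delta_k(\mathbf{z})\Delta_k(\mathbf{w}))/(1+\Delta_k(\mathbf{z})^2)$. Displacement-based compliance: $\mathcal{C}_X(\mathbf{z},\mathbf{a})=\sup_{\mathbf{u}_1,\mathbf{u}_2,\mathbf{w}}\{\mathbf{f}^\top\mathbf{w}-\frac{E_0}{2}\sum_k((\hat{\mathrm{e}}_k)_+)^2a_k\hat l_k(\mathbf{z})\}$. Stress-based problem: $\inf\{\frac{1}{2E_0}\sum_k\frac{\hat s_k^2}{a_k}\hat l_k(\mathbf{z}):\hat{\mathbf{s}}\in\mathbb{R}^m_+,\mathbf{B}_1^\top\mathbf{s}=\mathbf{B}_2^\top\mathbf{s}=\mathbf{0},\mathbf{D}^\top\mathbf{q}=\mathbf{f},s_k=\hat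 s_k/J_{kk}(\mathbf{z}),q_k=\Delta_k(\mathbf{z})\hat s_k/J_{kk}(\mathbf{z})\}$ (convention $0/0=0$, $c/0=+\infty$ for $c>0$), known to equal $\mathcal{C}_X(\mathbf{z},\mathbf{a})$. $(\mathrm{MCGS}_X)$: $\mathcal{C}_{X,\min}=\inf\{\mathcal{C}_X(\mathbf{z},\mathbf{a}):\mathbf{z}\in\mathbb{R}^n,\mathbf{a}\in\mathbb{R}^m_+,\sum_ka_k\hat l_k(\mathbf{z})\le V_0\}$. *)

From HB Require Import structures.
From mathcomp Require Import all_boot all_order all_algebra.
From mathcomp Require Import all_classical all_reals all_analysis.
Set Implicit Arguments. Unset Strict Implicit. Unset Printing Implicit Defensive.
Import Order.TTheory GRing.Theory Num.Theory.
Import numFieldNormedType.Exports.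
Local Open Scope classical_set_scope.
Local Open Scope ring_scope.

(* Points of X are indexed by 'I_nb (nb = #X) via an injective p : 'I_nb -> R*R.
   bd i  <=>  p i lies on the boundary of Omega.
   Vectors of R^n are functions 'I_nb -> R vanishing on boundary points.
   Bars (unordered pairs of distinct points) are indexed by pairs (i,j), i<j,
   with chi_-(k) = i and chi_+(k) = j. *)

Definition edge (nb : nat) := {ij : 'I_nb * 'I_nb | (ij.1 < ij.2)%N}.
Definition em {nb} (k : edge nb) : 'I_nb := (val k).1.
Definition ep {nb} (k : edge nb) : 'I_nb := (val k).2.

Section Defs.
Context {R : realType} {nb : nat}.
Implicit Types (p : 'I_nb -> R * R) (bd : 'I_nb -> bool) (f : 'I_nb -> R).

Definition vanish bd (u : 'I_nb -> R) := forall i, bd i -> u i = 0.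

Definition dx p (k : edge nb) := (p (ep k)).1 - (p (em k)).1.
Definition dy p (k : edge nb) := (p (ep k)).2 - (p (em k)).2.
Definition len p (k : edge nb) := Num.sqrt (dx p k ^+ 2 + dy p k ^+ 2).

Definition Bu p (u1 u2 : 'I_nb -> R) (k : edge nb) :=
  ((u1 (ep k) - u1 (em k)) * dx p k + (u2 (ep k) - u2 (em k)) * dy p k) / len p k.
Definition Dw (w : 'I_nb -> R) (k : edge nb) := w (ep k) - w (em k).

Definition incid (k : edge nb) (i : 'I_nb) : R :=
  (ep k == i)%:R - (em k == i)%:R.
Definition B1T p (s : edge nb -> R) (i : 'I_nb) :=
  \sum_(k : edge nb) s k * (dx p k / len p k) * incid k i.
Definition B2T p (s : edge nb -> R) (i : 'I_nb) :=
  \sum_(k : edge nb) s k * (dy p k / len p k) * incid k i.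
Definition DT (q : edge nb -> R) (i : 'I_nb) :=
  \sum_(k : edge nb) q k * incid k i.

Definition inK (t1 t2 t3 : R) := 0 <= t1 /\ 0 <= t2 /\ t3 ^+ 2 <= 2 * t1 * t2.

Definition PX_feas bd p f (s q r : edge nb -> R) :=
  (forall k, 0 <= s k) /\ (forall k, 0 <= r k) /\
  (forall i, ~~ bd i -> B1T p s i = 0) /\ (forall i, ~~ bd i -> B2T p s i = 0) /\
  (forall i, ~~ bd i -> DT q i = f i) /\
  (forall k, inK (r k) (s k) (q k)).
Definition PX_obj p (s r : edge nb -> R) :=
  \sum_(k : edge nb) len p k * s k + 2 * \sum_(k : edge nb) len p k * r k.
Definition PX_solves bd p f (s q r : edge nb -> R) :=
  PX_feas bd p f s q r /\
  forall s' q' r', PX_feas bd p f s' q' r' -> PX_obj p s r <= PX_obj p s' r'.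
Definition ZX bd p f : R :=
  inf [set x | exists s q r, PX_feas bd p f s q r /\ x = PX_obj p s r].

Definition PXd_feas bd p (u1 u2 w : 'I_nb -> R) (t1 t2 t3 : edge nb -> R) :=
  vanish bd u1 /\ vanish bd u2 /\ vanish bd w /\
  (forall k, 0 <= t1 k) /\ (forall k, 0 <= t2 k) /\
  (forall k, t2 k + Bu p u1 u2 k = len p k) /\
  (forall k, t3 k + Dw w k = 0) /\
  (forall k, t1 k = 2 * len p k) /\
  (forall k, inK (t1 k) (t2 k) (t3 k)).
Definition loadw bd f (w : 'I_nb -> R) := \sum_(i | ~~ bd i) f i * w i.
Definition PXd_solves bd p f (u1 u2 w : 'I_nb -> R) :=
  exists t1 t2 t3, PXd_feas bd p u1 u2 w t1 t2 t3 /\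
  forall u1' u2' w' t1' t2' t3', PXd_feas bd p u1' u2' w' t1' t2' t3' ->
    loadw bd f w' <= loadw bd f w.

Definition Delta p (z : 'I_nb -> R) (k : edge nb) := Dw z k / len p k.
Definition Jkk p (z : 'I_nb -> R) (k : edge nb) := Num.sqrt (1 + Delta p z k ^+ 2).
Definition lhat p (z : 'I_nb -> R) (k : edge nb) := Jkk p z k * len p k.
Definition strain p (u1 u2 : 'I_nb -> R) (k : edge nb) := Bu p u1 u2 k / len p k.
Definition ehat p (u1 u2 w z : 'I_nb -> R) (k : edge nb) :=
  (strain p u1 u2 k + Delta p z k * Delta p w k) / (1 + Delta p z k ^+ 2).

Definition disp_obj bd p f (E0 : R) (z : 'I_nb -> R) (a : edge nb -> R)
    (u1 u2 w : 'I_nb -> R) :=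
  loadw bd f w - E0 / 2 *
    \sum_(k : edge nb) (Num.max (ehat p u1 u2 w z k) 0) ^+ 2 * a k * lhat p z k.
Definition CX bd p f E0 (z : 'I_nb -> R) (a : edge nb -> R) : \bar R :=
  ereal_sup [set x | exists u1 u2 w, vanish bd u1 /\ vanish bd u2 /\ vanish bd w
                     /\ x = (disp_obj bd p f E0 z a u1 u2 w)%:E].
Definition disp_solves bd p f E0 (z : 'I_nb -> R) (a : edge nb -> R)
    (u1 u2 w : 'I_nb -> R) :=
  vanish bd u1 /\ vanish bd u2 /\ vanish bd w /\
  forall u1' u2' w', vanish bd u1' -> vanish bd u2' -> vanish bd w' ->
    disp_obj bd p f E0 z a u1' u2' w' <= disp_obj bd p f E0 z a u1 u2 w.

Definition stress_feas bd p f (z : 'I_nb -> R) (sh : edge nb -> R) :=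
  (forall k, 0 <= sh k) /\
  let s := fun k => sh k / Jkk p z k in
  let q := fun k => Delta p z k * sh k / Jkk p z k in
  (forall i, ~~ bd i -> B1T p s i = 0) /\ (forall i, ~~ bd i -> B2T p s i = 0) /\
  (forall i, ~~ bd i -> DT q i = f i).
(* term 1/(2E0) * sh_k^2/a_k * lhat_k with 0/0 = 0 and c/0 = +oo for c > 0 *)
Definition stress_term p (E0 : R) (z : 'I_nb -> R) (a sh : edge nb -> R)
    (k : edge nb) : \bar R :=
  if a k == 0 then (if sh k == 0 then 0%E else +oo%E)
  else ((sh k ^+ 2 / a k) * lhat p z k / (2 * E0))%:E.
Definition stress_obj p E0 z a sh : \bar R :=
  (\sum_(k : edge nb) stress_term p E0 z a sh k)%E.
Definition stress_solves bd p f E0 (z : 'I_nb -> R) (a sh : edge nb -> R) :=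
  stress_feas bd p f z sh /\
  forall sh', stress_feas bd p f z sh' ->
    (stress_obj p E0 z a sh <= stress_obj p E0 z a sh')%E.

Definition MCGS_feas bd p (V0 : R) (z : 'I_nb -> R) (a : edge nb -> R) :=
  vanish bd z /\ (forall k, 0 <= a k) /\
  \sum_(k : edge nb) a k * lhat p z k <= V0.
Definition Cmin bd p f E0 V0 : \bar R :=
  ereal_inf [set x | exists z a, MCGS_feas bd p V0 z a /\ x = CX bd p f E0 z a].
Definition MCGS_solves bd p f E0 V0 (z : 'I_nb -> R) (a : edge nb -> R) :=
  MCGS_feas bd p V0 z a /\
  forall z' a', MCGS_feas bd p V0 z' a' -> (CX bd p f E0 z a <= CX bd p f E0 z' a')%E.

Definition conv_pts (S : 'I_nb -> bool) p : set (R * R) :=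
  [set x | exists lam : 'I_nb -> R, (forall i, 0 <= lam i) /\
     (forall i, ~~ S i -> lam i = 0) /\ \sum_i lam i = 1 /\
     x = (\sum_i lam i * (p i).1, \sum_i lam i * (p i).2)].

End Defs.

From HB Require Import structures.
From mathcomp Require Import all_boot all_order all_algebra.
From mathcomp Require Import all_classical all_reals all_analysis.
From mathcomp Require Import ring lra.
Import Order.TTheory GRing.Theory Num.Theory.
Import numFieldNormedType.Exports.
Local Open Scope classical_set_scope.
Local Open Scope ring_scope.

(* (P_X) and (P_X^* ) are a primal-dual pair of second-order cone programs.
   Weak duality is the bar-wise self-duality of the cone K.  Strong duality
   comes from the KKT conditions of (P_X^* ): Farkas' lemma applied to the
   gradients of the active constraints either yields the multipliers, which
   form a solution of (P_X) with the same value, or an ascent direction; the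
   latter is impossible because 0 is a Slater point of (P_X^* ).
   Complementary slackness then gives, bar by bar,
     q_k = s_k (D w)_k / (2 l_k),   r_k = s_k (D w)_k^2 / (8 l_k^2),
   and makes the dual constraint active wherever s_k > 0.  For the shell
   z = w / 2 this says that every bar with a_k <> 0 has the same strain
   c = Z_X / (E0 V0) under the displacement c (u1, u2, w), so the displacement
   and stress energies of (z, a) both equal Z_X^2 / (2 E0 V0).  Conversely, for
   any admissible design (z', a') the dual constraint bounds every strain
   ehat(u1, u2, w; z') by 1, so the displacement c (u1, u2, w) alone gives
   C_X(z', a') >= c Z_X - E0 c^2 V0 / 2 = Z_X^2 / (2 E0 V0). *)

Section Farkas.
Context {R : realFieldType} {T : finType}.

Definition fdot (x y : T -> R) := \sum_t x t * y t.

Lemma fdot_subl (x y d : T -> R) c :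
  fdot (fun t => x t - c * y t) d = fdot x d - c * fdot y d.
Proof. by rewrite /fdot mulr_sumr -sumrB; apply: eq_bigr => t _; ring. Qed.

Lemma fdot_subr (x d e : T -> R) c :
  fdot x (fun t => d t - c * e t) = fdot x d - c * fdot x e.
Proof. by rewrite /fdot mulr_sumr -sumrB; apply: eq_bigr => t _; ring. Qed.

Lemma fdot_self_gt0 (x : T -> R) t0 : x t0 != 0 -> 0 < fdot x x.
Proof.
move=> xt0; rewrite /fdot (bigD1 t0) //= ltr_pwDl //.
  by rewrite -expr2 exprn_even_gt0.
by apply: sumr_ge0 => t _; rewrite -expr2 sqr_ge0.
Qed.

(* Fourier-Motzkin elimination: when the separating direction [d] of the
   tail fails for the head generator [a j], project the whole problem along
   [a j] onto the hyperplane [fdot (a j) _ = 0] and recurse. *)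
Theorem farkas {I : eqType} (s : seq I) (a : I -> T -> R) (b : T -> R) :
  uniq s ->
  (exists2 mu : I -> R, forall i, 0 <= mu i &
     forall t, b t = \sum_(i <- s) mu i * a i t)
  \/ (exists2 d, forall i, i \in s -> fdot (a i) d <= 0 & 0 < fdot b d).
Proof.
elim: s a b => [|j s IH] a b /=.
  move=> _; case: (boolP [forall t, b t == 0]) => [/forallP b0|].
    by left; exists (fun=> 0) => // t; rewrite big_nil; apply/eqP.
  rewrite negb_forall => /existsP[t0 bt0].
  by right; exists b => //; apply: fdot_self_gt0 bt0.
case/andP=> js us.
have sumj (mu : I -> R) m F : \sum_(i <- s) (if i == j then m else mu i) * F i
                               = \sum_(i <- s) mu i * F i.
  by apply: eq_big_seq => i ins; case: eqP => // ij; rewrite -ij ins in js.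
have [[mu mu0 bE]|[d ad bd]] := IH a b us.
  left; exists (fun i => if i == j then 0 else mu i) => [i|t]; first by case: ifP.
  by rewrite big_cons eqxx mul0r add0r sumj.
have [ajd|ajd] := lerP (fdot (a j) d) 0.
  by right; exists d => // i; rewrite inE => /predU1P[->|]; last exact: ad.
set al := fdot (a j) d in ajd *.
pose a' i t := a i t - fdot (a i) d / al * a j t.
pose b' t := b t - fdot b d / al * a j t.
have [[mu mu0 bE]|[d' ad' bd']] := IH a' b' us.
  pose mj := (fdot b d - \sum_(i <- s) mu i * fdot (a i) d) / al.
  left; exists (fun i => if i == j then mj else mu i) => [i|t].
    case: ifP => // _; rewrite divr_ge0 ?subr_ge0 ?(ltW ajd) //.
    apply: le_trans (ltW bd); rewrite big_seq_cond; apply: sumr_le0 => k /andP[ks _].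
    by rewrite mulr_ge0_le0 ?mu0 ?ad.
  have -> : b t = b' t + fdot b d / al * a j t by rewrite /b'; ring.
  rewrite big_cons eqxx sumj bE /a'; under eq_bigr do rewrite mulrBr.
  rewrite sumrB.
  have -> : \sum_(i <- s) mu i * (fdot (a i) d / al * a j t)
            = (\sum_(i <- s) mu i * fdot (a i) d) / al * a j t.
    by rewrite !mulr_suml; apply: eq_bigr => i _; ring.
  by rewrite /mj; ring.
right; exists (fun t => d' t - fdot (a j) d' / al * d t).
  move=> i; rewrite inE fdot_subr => /predU1P[->|ins].
    by rewrite -/al mulfVK ?subrr // gt_eqF.
  by have := ad' i ins; rewrite /a' fdot_subl; lra.
by move: bd'; rewrite fdot_subr /b' fdot_subl; lra.
Qed.

End Farkas.

Section Join3.
Context {R : realFieldType} {I : finType}.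

Definition join3 (g1 g2 g3 : I -> R) (t : I + I + I) : R :=
  match t with inl (inl i) => g1 i | inl (inr i) => g2 i | inr i => g3 i end.

Lemma fdot_join3 (g1 g2 g3 : I -> R) d :
  fdot (join3 g1 g2 g3) d = \sum_i g1 i * d (inl (inl i))
                            + \sum_i g2 i * d (inl (inr i)) + \sum_i g3 i * d (inr i).
Proof. by rewrite /fdot !big_sumType. Qed.

End Join3.

Section Scalar.
Context {R : realFieldType}.
Implicit Types (g A Q t : R).

Lemma cone_dot_identity (r s q t1 t2 t3 : R) :
  (t1 * q + s * t3) ^+ 2 + s ^+ 2 * (2 * t1 * t2 - t3 ^+ 2)
    + t1 ^+ 2 * (2 * r * s - q ^+ 2)
  = 2 * t1 * s * (r * t1 + s * t2 + q * t3).
Proof. by ring. Qed.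

Lemma sqr_le0 {x : R} : x ^+ 2 <= 0 -> x = 0.
Proof. by move=> x2; apply/eqP; rewrite -sqrf_eq0 eq_le x2 sqr_ge0. Qed.

Lemma small_step_quadratic_ge0 g A Q : 0 <= g -> 0 <= Q -> (g = 0 -> A < 0) ->
  exists2 tau, 0 < tau & forall t, 0 < t -> t <= tau -> 0 <= g - t * A - t ^+ 2 * Q.
Proof.
move=> g0 Q0 hA; have [g_eq0|g_neq0] := eqVneq g 0.
  have A0 := hA g_eq0; exists (- A / (Q + 1)) => [|t t0]; first by rewrite divr_gt0 //; lra.
  by rewrite ler_pdivlMr; [rewrite g_eq0 => le_tA; nra | lra].
have gp : 0 < g by rewrite lt_def g_neq0.
have nA := normr_ge0 A; have leA := ler_norm A.
exists (Num.min 1 (g / (`|A| + Q + 1))) => [|t t0].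
  by rewrite lt_min ltr01 divr_gt0 //; lra.
rewrite le_min ler_pdivlMr; last lra.
case/andP=> t1 le_tg.
have : 0 <= t * (`|A| - A) by rewrite mulr_ge0 //; lra.
have : 0 <= t * (1 - t) * Q by rewrite !mulr_ge0 //; lra.
by nra.
Qed.

Lemma exists_common_step (I : finType) (P : I -> R -> Prop) :
  (forall i, exists2 tau, 0 < tau & forall t, 0 < t -> t <= tau -> P i t) ->
  exists2 t, 0 < t & forall i, P i t.
Proof.
move=> /fin_all_exists2[tau tau0 htau].
exists (\big[Num.min/1]_i tau i) => [|i]; first exact: lt_bigmin.
by apply: htau; [exact: lt_bigmin | exact: bigmin_le].
Qed.

Lemma mul_sub_half_sqr_max_le (E sh e : R) : 0 < E -> 0 <= sh ->
  sh * e - E / 2 * Num.max e 0 ^+ 2 <= sh ^+ 2 / (2 * E).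
Proof.
move=> E0 sh0; set m := Num.max e 0.
have em : e <= m by rewrite le_max lexx.
have -> : sh ^+ 2 / (2 * E) = sh * m - E / 2 * m ^+ 2 + (E * m - sh) ^+ 2 / (2 * E).
  by field; rewrite gt_eqF.
have : 0 <= (E * m - sh) ^+ 2 / (2 * E) by rewrite divr_ge0 ?sqr_ge0 //; lra.
by nra.
Qed.

Lemma max_mul_sqr_le (c e : R) : 0 <= c -> e <= 1 -> Num.max (c * e) 0 ^+ 2 <= c ^+ 2.
Proof.
move=> c0 e1; have [ce0|ce0] := leP (c * e) 0; first by rewrite expr0n sqr_ge0.
have ce_le : c * e <= c by nra.
by rewrite ler_sqr ?nnegrE // ltW.
Qed.

End Scalar.

Section Cone.
Context {R : realType}.

Lemma inK_dot_ge0 {r s q t1 t2 t3 : R} : inK r s q -> inK t1 t2 t3 ->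
  0 <= r * t1 + s * t2 + q * t3.
Proof.
move=> [r0 [s0 hq]] [t10 [t20 ht]].
have [s_eq0|s_neq0] := eqVneq s 0.
  rewrite s_eq0 mulr0 in hq; rewrite s_eq0 (sqr_le0 hq).
  by rewrite !(mul0r, addr0) mulr_ge0.
have [t1_eq0|t1_neq0] := eqVneq t1 0.
  rewrite t1_eq0 mulr0 mul0r in ht; rewrite t1_eq0 (sqr_le0 ht).
  by rewrite !(mulr0, add0r, addr0) mulr_ge0.
have t1s : 0 < 2 * t1 * s by rewrite !mulr_gt0 // lt_def ?s_neq0 ?t1_neq0.
rewrite -(pmulr_rge0 _ t1s) -cone_dot_identity.
by rewrite !addr_ge0 ?sqr_ge0 // mulr_ge0 ?sqr_ge0 // subr_ge0.
Qed.

Lemma inK_dot_eq0 {r s q t1 t2 t3 : R} : inK r s q -> inK t1 t2 t3 -> 0 < t1 ->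
  r * t1 + s * t2 + q * t3 = 0 ->
  [/\ q = - (s * t3) / t1, r = s * t3 ^+ 2 / (2 * t1 ^+ 2)
     & 0 < s -> t3 ^+ 2 = 2 * t1 * t2].
Proof.
move=> [r0 [s0 hq]] [_ [t20 ht]] t1p dot0.
have t1_neq0 : t1 != 0 by rewrite gt_eqF.
have [s_eq0|s_neq0] := eqVneq s 0.
  rewrite s_eq0 mulr0 in hq; have q0 := sqr_le0 hq; rewrite s_eq0 in dot0 *.
  have /eqP : r * t1 = 0 by rewrite q0 in dot0; lra.
  rewrite mulf_eq0 (negbTE t1_neq0) orbF => /eqP r_eq0.
  by split; rewrite ?q0 ?r_eq0 ?mul0r ?oppr0 ?mul0r // ltxx.
have sum0 := @cone_dot_identity _ r s q t1 t2 t3; rewrite dot0 mulr0 in sum0.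
have A0 := sqr_ge0 (t1 * q + s * t3).
have B0 : 0 <= s ^+ 2 * (2 * t1 * t2 - t3 ^+ 2) by rewrite mulr_ge0 ?sqr_ge0 // subr_ge0.
have C0 : 0 <= t1 ^+ 2 * (2 * r * s - q ^+ 2) by rewrite mulr_ge0 ?sqr_ge0 // subr_ge0.
have /eqP : (t1 * q + s * t3) ^+ 2 = 0 by lra.
rewrite sqrf_eq0 addr_eq0 => /eqP qE.
have /eqP : s ^+ 2 * (2 * t1 * t2 - t3 ^+ 2) = 0 by lra.
rewrite mulf_eq0 sqrf_eq0 (negbTE s_neq0) /= subr_eq0 => /eqP tE.
have /eqP : t1 ^+ 2 * (2 * r * s - q ^+ 2) = 0 by lra.
rewrite mulf_eq0 sqrf_eq0 (negbTE t1_neq0) /= subr_eq0 => /eqP rE.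
have q_val : q = - (s * t3) / t1 by rewrite -qE; field.
split=> [//||_]; last exact/esym.
have s2 : 2 * s != 0 by rewrite mulf_neq0 ?pnatr_eq0.
by apply: (mulfI s2); rewrite mulrA [2 * s * r]mulrAC rE q_val; field.
Qed.

End Cone.

Section Network.
Context {R : realType} {nb : nat}.
Implicit Types (p : 'I_nb -> R * R) (bd : 'I_nb -> bool) (f : 'I_nb -> R).
Implicit Types (u w : 'I_nb -> R) (k : edge nb).

Lemma em_neq_ep k : em k != ep k.
Proof. by case: k => -[i j] /= ij; rewrite /em /ep /= neq_ltn ij. Qed.

Lemma len_gt0 p k : injective p -> 0 < len p k.
Proof.
move=> p_inj; rewrite /len sqrtr_gt0 lt_def addr_ge0 ?sqr_ge0 // andbT.
apply: contra (em_neq_ep k) => /eqP /eqP.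
rewrite paddr_eq0 ?sqr_ge0 // !sqrf_eq0 !subr_eq0 /dx /dy => /andP[/eqP ex /eqP ey].
by apply/eqP/p_inj/esym/injective_projections.
Qed.

Lemma sum_incid k u : \sum_i incid k i * u i = Dw u k.
Proof.
have pick j : \sum_i (j == i)%:R * u i = u j.
  rewrite (bigD1 j) //= eqxx mul1r big1 ?addr0 // => i /negbTE.
  by rewrite eq_sym => ->; rewrite mul0r.
by rewrite /incid; under eq_bigr do rewrite mulrBl; rewrite sumrB !pick.
Qed.

Lemma sum_mul_Bu p (s : edge nb -> R) u1 u2 :
  \sum_k s k * Bu p u1 u2 k = \sum_i (u1 i * B1T p s i + u2 i * B2T p s i).
Proof.
have Bu_sum k : Bu p u1 u2 k = \sum_i (dx p k / len p k * incid k i * u1 i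
                                       + dy p k / len p k * incid k i * u2 i).
  transitivity (dx p k / len p k * \sum_i incid k i * u1 i
                + dy p k / len p k * \sum_i incid k i * u2 i).
    by rewrite !sum_incid /Bu /Dw; ring.
  by rewrite !mulr_sumr -big_split; apply: eq_bigr => i _ /=; ring.
under eq_bigr do rewrite Bu_sum mulr_sumr.
rewrite exchange_big /=; apply: eq_bigr => i _.
by rewrite /B1T /B2T !mulr_sumr -big_split /=; apply: eq_bigr => k _; ring.
Qed.

Lemma sum_mul_Dw (q : edge nb -> R) w : \sum_k q k * Dw w k = \sum_i w i * DT q i.
Proof.
under eq_bigr do rewrite -sum_incid mulr_sumr.
rewrite exchange_big /=; apply: eq_bigr => i _.
by rewrite /DT mulr_sumr; apply: eq_bigr => k _; ring.
Qed.

Lemma sum_mul_Bu_eq0 {p bd} {s : edge nb -> R} {u1 u2} :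
  vanish bd u1 -> vanish bd u2 ->
  (forall i, ~~ bd i -> B1T p s i = 0) -> (forall i, ~~ bd i -> B2T p s i = 0) ->
  \sum_k s k * Bu p u1 u2 k = 0.
Proof.
move=> v1 v2 hB1 hB2; rewrite sum_mul_Bu big1 // => i _.
have [bi|bi] := boolP (bd i); first by rewrite v1 // v2 // !mul0r addr0.
by rewrite hB1 // hB2 // !mulr0 addr0.
Qed.

Lemma sum_mul_Dw_load {bd f} {q : edge nb -> R} {w} :
  vanish bd w -> (forall i, ~~ bd i -> DT q i = f i) ->
  \sum_k q k * Dw w k = loadw bd f w.
Proof.
move=> vw hDT; rewrite sum_mul_Dw (bigID bd) /= big1 ?add0r => [|i bi].
  by apply: eq_bigr => i bi; rewrite hDT // mulrC.
by rewrite vw // mul0r.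
Qed.

Lemma vanish_add_scale {bd u w} t :
  vanish bd u -> vanish bd w -> vanish bd (fun i => u i + t * w i).
Proof. by move=> vu vw i bi; rewrite vu // vw // mulr0 addr0. Qed.

Lemma loadw_add_scale bd f u w t :
  loadw bd f (fun i => u i + t * w i) = loadw bd f u + t * loadw bd f w.
Proof. by rewrite /loadw mulr_sumr -big_split; apply: eq_bigr => i _ /=; ring. Qed.

Lemma loadw_scale bd f (c : R) w : loadw bd f (fun i => c * w i) = c * loadw bd f w.
Proof. by rewrite /loadw mulr_sumr; apply: eq_bigr => i _; ring. Qed.

Definition mask bd u i := if bd i then 0 else u i.

Lemma vanish_mask bd u : vanish bd (mask bd u).
Proof. by move=> i bi; rewrite /mask bi. Qed.

Lemma sum_mask bd (g u : 'I_nb -> R) :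
  \sum_i mask bd g i * u i = \sum_i g i * mask bd u i.
Proof. by apply: eq_bigr => i _; rewrite /mask; case: (bd i); rewrite ?mul0r ?mulr0. Qed.

End Network.

Section Duality.
Context {R : realType} {nb : nat}.
Implicit Types (p : 'I_nb -> R * R) (bd : 'I_nb -> bool) (f : 'I_nb -> R).
Implicit Types (u w : 'I_nb -> R) (k : edge nb).

Definition dual_slack p u1 u2 w k :=
  len p k - Bu p u1 u2 k - Dw w k ^+ 2 / (4 * len p k).

Definition slack_deriv p w (c1 c2 cw : 'I_nb -> R) k :=
  Bu p c1 c2 k + Dw w k * Dw cw k / (2 * len p k).

Lemma dual_slack_step p u1 u2 w c1 c2 cw t k : injective p ->
  dual_slack p (fun i => u1 i + t * c1 i) (fun i => u2 i + t * c2 i)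
                (fun i => w i + t * cw i) k
  = dual_slack p u1 u2 w k - t * slack_deriv p w c1 c2 cw k
    - t ^+ 2 * (Dw cw k ^+ 2 / (4 * len p k)).
Proof.
move=> p_inj; have := len_gt0 p k p_inj.
by rewrite /dual_slack /slack_deriv /Bu /Dw => lp; field; rewrite gt_eqF.
Qed.

Lemma PXd_feas_slack_ge0 {p bd u1 u2 w t1 t2 t3} k : injective p ->
  PXd_feas bd p u1 u2 w t1 t2 t3 -> 0 <= dual_slack p u1 u2 w k.
Proof.
move=> p_inj [_ [_ [_ [_ [_ [e2 [e3 [e1 hK]]]]]]]].
have lp := len_gt0 p k p_inj; have [_ [_ ht]] := hK k.
have t3E : t3 k = - Dw w k by apply/eqP; rewrite -subr_eq0 opprK (e3 k).
have -> : dual_slack p u1 u2 w k = t2 k - t3 k ^+ 2 / (4 * len p k).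
  by rewrite /dual_slack -(e2 k) t3E sqrrN; ring.
by rewrite subr_ge0 ler_pdivrMr ?mulr_gt0 //; rewrite e1 in ht; lra.
Qed.

Lemma PXd_feas_of_slack {p bd u1 u2 w} : injective p ->
  vanish bd u1 -> vanish bd u2 -> vanish bd w ->
  (forall k, 0 <= dual_slack p u1 u2 w k) ->
  PXd_feas bd p u1 u2 w (fun k => 2 * len p k) (fun k => len p k - Bu p u1 u2 k)
    (fun k => - Dw w k).
Proof.
move=> p_inj v1 v2 vw slack0; have lp k := len_gt0 p k p_inj.
have t2_ge0 k : 0 <= len p k - Bu p u1 u2 k.
  have -> : len p k - Bu p u1 u2 k
            = dual_slack p u1 u2 w k + Dw w k ^+ 2 / (4 * len p k).
    by rewrite /dual_slack; ring.
  by rewrite addr_ge0 ?divr_ge0 ?sqr_ge0 ?mulr_ge0 // ltW.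
have t3_le k : (- Dw w k) ^+ 2 <= 2 * (2 * len p k) * (len p k - Bu p u1 u2 k).
  rewrite -subr_ge0 (_ : _ - _ = 4 * len p k * dual_slack p u1 u2 w k).
    by rewrite mulr_ge0 ?mulr_ge0 // ltW.
  by rewrite /dual_slack sqrrN; field; rewrite gt_eqF.
do 3!split=> //; split=> [k|]; first by rewrite mulr_ge0 // ltW.
split; first exact: t2_ge0.
split=> [k|]; first by ring.
split=> [k|]; first by ring.
split=> [//|k]; split; first by rewrite mulr_ge0 // ltW.
by split.
Qed.

Lemma PX_obj_sub_loadw {p bd f} {s q r : edge nb -> R} {u1 u2 w t1 t2 t3} :
  PX_feas bd p f s q r -> PXd_feas bd p u1 u2 w t1 t2 t3 ->
  PX_obj p s r - loadw bd f w = \sum_k (r k * t1 k + s k * t2 k + q k * t3 k).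
Proof.
move=> [_ [_ [hB1 [hB2 [hDT _]]]]] [v1 [v2 [vw [_ [_ [e2 [e3 [e1 _]]]]]]]].
transitivity (\sum_k (len p k * s k + 2 * (len p k * r k)
                     - s k * Bu p u1 u2 k - q k * Dw w k)).
  rewrite !sumrB big_split /= (sum_mul_Bu_eq0 v1 v2 hB1 hB2).
  by rewrite (sum_mul_Dw_load vw hDT) /PX_obj mulr_sumr subr0.
apply: eq_bigr => k _; rewrite e1 (_ : t2 k = len p k - Bu p u1 u2 k).
  by rewrite (_ : t3 k = - Dw w k); [ring | apply/eqP; rewrite -subr_eq0 opprK e3].
by rewrite -(e2 k); ring.
Qed.

Lemma weak_duality {p bd f} {s q r : edge nb -> R} {u1 u2 w t1 t2 t3} :
  PX_feas bd p f s q r -> PXd_feas bd p u1 u2 w t1 t2 t3 ->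
  loadw bd f w <= PX_obj p s r.
Proof.
move=> feas dfeas; rewrite -subr_ge0 (PX_obj_sub_loadw feas dfeas).
have [_ [_ [_ [_ [_ hKs]]]]] := feas; have [_ [_ [_ [_ [_ [_ [_ [_ hK]]]]]]]] := dfeas.
by apply: sumr_ge0 => k _; apply: inK_dot_ge0.
Qed.

Lemma ZX_eq_obj {p bd f} {s q r : edge nb -> R} :
  PX_solves bd p f s q r -> ZX bd p f = PX_obj p s r.
Proof.
move=> [feas opt]; apply/eqP; rewrite eq_le; apply/andP; split.
  apply: ge_inf; last by exists s, q, r.
  by exists (PX_obj p s r) => x [s' [q' [r' [feas' ->]]]]; apply: opt feas'.
apply: lb_le_inf; first by exists (PX_obj p s r), s, q, r.
by move=> x [s' [q' [r' [feas' ->]]]]; apply: opt feas'.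
Qed.

End Duality.


Section StrongDuality.
Context {R : realType} {nb : nat}.
Variables (p : 'I_nb -> R * R) (bd : 'I_nb -> bool) (f u1 u2 w : 'I_nb -> R).
Hypotheses (p_inj : injective p)
  (v1 : vanish bd u1) (v2 : vanish bd u2) (vw : vanish bd w)
  (slack_ge0 : forall k, 0 <= dual_slack p u1 u2 w k)
  (dual_max : forall y1 y2 yw, vanish bd y1 -> vanish bd y2 -> vanish bd yw ->
     (forall k, 0 <= dual_slack p y1 y2 yw k) -> loadw bd f yw <= loadw bd f w).

Let lp k : 0 < len p k := len_gt0 p k p_inj.

Lemma slack_deriv_active k : dual_slack p u1 u2 w k = 0 ->
  slack_deriv p w u1 u2 w k = len p k + Dw w k ^+ 2 / (4 * len p k).
Proof.
rewrite /dual_slack /slack_deriv => /eqP; rewrite subr_eq0 => /eqP slack0.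
by rewrite (_ : Bu _ _ _ _ = len p k - Dw w k ^+ 2 / (4 * len p k)); [field | lra];
  rewrite gt_eqF.
Qed.

(* Slater argument: moving from (u1, u2, w) towards the strictly feasible
   point 0 makes every active constraint strictly inactive to first order, so
   a short step along [d - eps (u1, u2, w)] stays feasible and, for small
   [eps], still increases the load. *)
Lemma dual_no_ascent d1 d2 dw : vanish bd d1 -> vanish bd d2 -> vanish bd dw ->
  (forall k, dual_slack p u1 u2 w k = 0 -> slack_deriv p w d1 d2 dw k <= 0) ->
  loadw bd f dw <= 0.
Proof.
move=> vd1 vd2 vdw hd; rewrite leNgt; apply/negP => F_gt0.
set L := loadw bd f w; set F := loadw bd f dw in F_gt0.
pose eps := F / (`|L| + 1).
have nL := normr_ge0 L.
have eps_gt0 : 0 < eps by rewrite divr_gt0 //; lra.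
have epsL : eps * L < F.
  have : eps * (`|L| + 1) = F by rewrite divfK // gt_eqF //; lra.
  have : eps * L <= eps * `|L| by rewrite ler_pM2l // ler_norm.
  lra.
pose c1 i := d1 i + - eps * u1 i.
pose c2 i := d2 i + - eps * u2 i.
pose cw i := dw i + - eps * w i.
have step k : exists2 tau, 0 < tau & forall t, 0 < t -> t <= tau ->
    0 <= dual_slack p (fun i => u1 i + t * c1 i) (fun i => u2 i + t * c2 i)
                      (fun i => w i + t * cw i) k.
  have Q0 : 0 <= Dw cw k ^+ 2 / (4 * len p k).
    by rewrite divr_ge0 ?sqr_ge0 ?mulr_ge0 // ltW.
  have A_lt0 : dual_slack p u1 u2 w k = 0 -> slack_deriv p w c1 c2 cw k < 0.
    move=> active; rewrite (_ : slack_deriv _ _ _ _ _ _ =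
        slack_deriv p w d1 d2 dw k - eps * slack_deriv p w u1 u2 w k).
      rewrite slack_deriv_active //; have := hd k active.
      have : 0 <= Dw w k ^+ 2 / (4 * len p k) by rewrite divr_ge0 ?sqr_ge0 ?mulr_ge0 // ltW.
      by have := lp k; nra.
    by rewrite /slack_deriv /c1 /c2 /cw /Bu /Dw; field; rewrite gt_eqF.
  have [tau tau0 htau] := small_step_quadratic_ge0 _ _ _ (slack_ge0 k) Q0 A_lt0.
  by exists tau => // t t0 t_le; rewrite dual_slack_step // htau.
have [t t_gt0 ht] := exists_common_step _ _ step.
have := dual_max _ _ _ (vanish_add_scale t v1 (vanish_add_scale (- eps) vd1 v1))
  (vanish_add_scale t v2 (vanish_add_scale (- eps) vd2 v2))
  (vanish_add_scale t vw (vanish_add_scale (- eps) vdw vw)) ht.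
rewrite !loadw_add_scale -/L -/F.
have : 0 < t * (F - eps * L) by rewrite mulr_gt0 // subr_gt0.
lra.
Qed.

(* Directions of (P_X^* ) are encoded as functions on three copies of the
   nodes, masked to vanish on the boundary: then [fdot (avec k)] is the
   derivative of [- dual_slack _ _ _ _ k] and [fdot bvec] that of the load. *)
Let avec k := join3 (mask bd (fun i => dx p k / len p k * incid k i))
  (mask bd (fun i => dy p k / len p k * incid k i))
  (mask bd (fun i => Dw w k / (2 * len p k) * incid k i)).
Let bvec := join3 (fun=> 0) (fun=> 0) (mask bd f).
Let dir (d : 'I_nb + 'I_nb + 'I_nb -> R) (c : 'I_nb -> 'I_nb + 'I_nb + 'I_nb) :=
  mask bd (fun i => d (c i)).

Lemma sum_incid_mask (c : R) k (v : 'I_nb -> R) :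
  \sum_i mask bd (fun i => c * incid k i) i * v i = c * Dw (mask bd v) k.
Proof. by rewrite sum_mask -sum_incid mulr_sumr; apply: eq_bigr => i _; rewrite mulrA. Qed.

Lemma fdot_avec k d : fdot (avec k) d =
  slack_deriv p w (dir d (inl \o inl)) (dir d (inl \o inr)) (dir d inr) k.
Proof. by rewrite fdot_join3 !sum_incid_mask /slack_deriv /Bu /Dw /dir /=; ring. Qed.

Lemma fdot_bvec d : fdot bvec d = loadw bd f (dir d inr).
Proof.
have sum0 (g : 'I_nb -> R) : \sum_i 0 * g i = 0 by rewrite big1 // => i _; rewrite mul0r.
rewrite fdot_join3 !sum0 !add0r sum_mask /loadw [RHS]big_mkcond.
by apply: eq_bigr => i _; rewrite /dir /mask; case: (bd i); rewrite ?mulr0.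
Qed.

Lemma dual_kkt : exists lam : edge nb -> R,
  [/\ forall k, 0 <= lam k, forall k, lam k * dual_slack p u1 u2 w k = 0,
      forall i, ~~ bd i -> B1T p lam i = 0, forall i, ~~ bd i -> B2T p lam i = 0
    & forall i, ~~ bd i -> DT (fun k => lam k * (Dw w k / (2 * len p k))) i = f i].
Proof.
pose act := [seq k <- index_enum (edge nb) | dual_slack p u1 u2 w k == 0].
have uact : uniq act by rewrite filter_uniq // index_enum_uniq.
have [[mu mu0 hmu]|[d hd hb]] := farkas act avec bvec uact; last first.
  suff : loadw bd f (dir d inr) <= 0 by rewrite -fdot_bvec leNgt hb.
  apply: (dual_no_ascent (dir d (inl \o inl)) (dir d (inl \o inr)));
    [exact: vanish_mask.. | move=> k active].
  by rewrite -fdot_avec hd // mem_filter active eqxx mem_index_enum.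
pose lam k := if dual_slack p u1 u2 w k == 0 then mu k else 0.
have hsum t : bvec t = \sum_k lam k * avec k t.
  rewrite hmu /act big_filter big_mkcond; apply: eq_bigr => k _.
  by rewrite /lam; case: ifP; rewrite ?mul0r.
exists lam; split=> [k|k|i bi|i bi|i bi].
- by rewrite /lam; case: ifP.
- by rewrite /lam; case: eqP => [->|_]; rewrite ?mulr0 ?mul0r.
- have := hsum (inl (inl i)); rewrite /= /mask (negbTE bi) => /esym <-.
  by apply: eq_bigr => k _; rewrite !mulrA.
- have := hsum (inl (inr i)); rewrite /= /mask (negbTE bi) => /esym <-.
  by apply: eq_bigr => k _; rewrite !mulrA.
have := hsum (inr i); rewrite /= /mask (negbTE bi) => ->.
by apply: eq_bigr => k _; rewrite !mulrA.
Qed.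

Lemma primal_of_dual_max :
  exists s q r, PX_feas bd p f s q r /\ PX_obj p s r = loadw bd f w.
Proof.
have [lam [lam0 compl hB1 hB2 hDT]] := dual_kkt.
pose q k := lam k * (Dw w k / (2 * len p k)).
pose r k := lam k * (Dw w k ^+ 2 / (8 * len p k ^+ 2)).
have r0 k : 0 <= r k.
  by apply: mulr_ge0 (lam0 k) _; rewrite divr_ge0 ?sqr_ge0 // mulr_ge0 // sqr_ge0.
exists lam, q, r; split.
  do 5!split=> //; split=> //; split=> //.
  by rewrite le_eqVlt /q /r; apply/orP; left; apply/eqP; field; rewrite gt_eqF ?lp.
transitivity (\sum_k (lam k * Bu p u1 u2 k + q k * Dw w k)).
  rewrite /PX_obj mulr_sumr -big_split; apply: eq_bigr => k _ /=.
  apply/eqP; rewrite -subr_eq0 -(compl k); apply/eqP.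
  by rewrite /dual_slack /q /r; field; rewrite gt_eqF ?lp.
by rewrite big_split /= (sum_mul_Bu_eq0 v1 v2 hB1 hB2) (sum_mul_Dw_load vw hDT) add0r.
Qed.

End StrongDuality.

Lemma strong_duality {R : realType} {nb : nat} {p : 'I_nb -> R * R} {bd f u1 u2 w} :
  injective p -> PXd_solves bd p f u1 u2 w ->
  exists s q r, PX_feas bd p f s q r /\ PX_obj p s r = loadw bd f w.
Proof.
move=> p_inj [t1 [t2 [t3 [feas opt]]]]; have [v1 [v2 [vw _]]] := feas.
apply: primal_of_dual_max v1 v2 vw _ _ => // [k|y1 y2 yw vy1 vy2 vyw slack0].
  exact: PXd_feas_slack_ge0 p_inj feas.
exact: opt (PXd_feas_of_slack p_inj vy1 vy2 vyw slack0).
Qed.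

Section Shell.
Context {R : realType} {nb : nat}.
Implicit Types (p : 'I_nb -> R * R) (bd : 'I_nb -> bool) (f u w z : 'I_nb -> R).
Implicit Types (k : edge nb) (a : edge nb -> R).

Lemma Jkk_gt0 p z k : 0 < Jkk p z k.
Proof. by rewrite sqrtr_gt0 ltr_pwDl // sqr_ge0. Qed.

Lemma Jkk_sqr p z k : Jkk p z k ^+ 2 = 1 + Delta p z k ^+ 2.
Proof. by rewrite sqr_sqrtr // addr_ge0 // sqr_ge0. Qed.

Lemma lhat_ge0 p z k : injective p -> 0 <= lhat p z k.
Proof. by move=> p_inj; rewrite mulr_ge0 // ltW // ?Jkk_gt0 ?len_gt0. Qed.

Lemma Delta_half p w k : Delta p (fun i => w i / 2) k = Dw w k / (2 * len p k).
Proof. by rewrite /Delta /Dw -mulrBl -mulrA -invfM. Qed.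

Lemma ehat_scale p (c : R) u1 u2 w z k :
  ehat p (fun i => c * u1 i) (fun i => c * u2 i) (fun i => c * w i) z k =
  c * ehat p u1 u2 w z k.
Proof. by rewrite /ehat /strain /Delta /Bu /Dw; ring. Qed.

(* Dual feasibility reads [strain <= 1 - Delta p w k ^+ 2 / 4]; completing the
   square in [x := Delta p z k] gives [1 - Delta p w k ^+ 2 / 4 + x * Delta p w k
   <= 1 + x ^+ 2]. *)
Lemma ehat_le1 p u1 u2 w z k : injective p -> 0 <= dual_slack p u1 u2 w k ->
  ehat p u1 u2 w z k <= 1.
Proof.
move=> p_inj slack0; have lp := len_gt0 p k p_inj.
rewrite /ehat /strain /Delta; set x := Dw z k / len p k; set y := Dw w k / len p k.
have x2 : 0 < 1 + x ^+ 2 by rewrite ltr_pwDl // sqr_ge0.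
rewrite ler_pdivrMr // mul1r.
have -> : Bu p u1 u2 k / len p k = 1 - y ^+ 2 / 4 - dual_slack p u1 u2 w k / len p k.
  by rewrite /y /dual_slack; field; rewrite gt_eqF.
have : 0 <= dual_slack p u1 u2 w k / len p k by rewrite divr_ge0 // ltW.
by have := sqr_ge0 (x - y / 2); lra.
Qed.

Lemma loadw_stress {bd p f z} {sh : edge nb -> R} {U1 U2 W} : injective p ->
  stress_feas bd p f z sh -> vanish bd U1 -> vanish bd U2 -> vanish bd W ->
  loadw bd f W = \sum_k sh k * lhat p z k * ehat p U1 U2 W z k.
Proof.
move=> p_inj [_ /= [hB1 [hB2 hDT]]] vU1 vU2 vW.
transitivity (\sum_k (sh k / Jkk p z k * Bu p U1 U2 k
                     + Delta p z k * sh k / Jkk p z k * Dw W k)).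
  by rewrite big_split /= (sum_mul_Bu_eq0 vU1 vU2 hB1 hB2) (sum_mul_Dw_load vW hDT) add0r.
apply: eq_bigr => k _.
have := len_gt0 p k p_inj; have := Jkk_gt0 p z k.
rewrite /lhat /ehat /strain -Jkk_sqr {3}/Delta => J0 l0.
by field; rewrite !gt_eqF.
Qed.

Lemma disp_obj_le_stress_obj bd p f E0 z a (sh : edge nb -> R) U1 U2 W :
  injective p -> 0 < E0 -> (forall k, 0 <= a k) -> stress_feas bd p f z sh ->
  vanish bd U1 -> vanish bd U2 -> vanish bd W ->
  ((disp_obj bd p f E0 z a U1 U2 W)%:E <= stress_obj p E0 z a sh)%E.
Proof.
move=> p_inj E0_gt0 a0 feas vU1 vU2 vW; have [sh0 _] := feas.
rewrite /disp_obj (loadw_stress p_inj feas vU1 vU2 vW) mulr_sumr -sumrB -sumEFin.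
apply: lee_sum => k _; rewrite /stress_term.
have [a_eq0|a_neq0] := eqVneq (a k) 0.
  have [->|_] := eqVneq (sh k) 0; last by rewrite leey.
  by rewrite a_eq0 !(mulr0, mul0r) subrr.
have a_gt0 : 0 < a k by rewrite lt_def a_neq0 a0.
have E_gt0 : 0 < E0 * a k by rewrite mulr_gt0.
have := mul_sub_half_sqr_max_le _ _ (ehat p U1 U2 W z k) E_gt0 (sh0 k).
move/(ler_wpM2l (lhat_ge0 p z k p_inj)); rewrite lee_fin.
have -> : sh k ^+ 2 / a k * lhat p z k / (2 * E0)
          = lhat p z k * (sh k ^+ 2 / (2 * (E0 * a k))) by field; rewrite !gt_eqF.
lra.
Qed.

Lemma disp_obj_scale_ge {bd p f E0 V0 z a} {c : R} {u1 u2 w} :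
  injective p -> 0 < E0 -> 0 <= c -> (forall k, 0 <= dual_slack p u1 u2 w k) ->
  MCGS_feas bd p V0 z a ->
  c * loadw bd f w - E0 / 2 * (c ^+ 2 * V0) <=
  disp_obj bd p f E0 z a (fun i => c * u1 i) (fun i => c * u2 i) (fun i => c * w i).
Proof.
move=> p_inj E0_gt0 c0 slack0 [_ [a0 vol]].
rewrite /disp_obj loadw_scale lerD2l lerN2 ler_wpM2l ?divr_ge0 //; first exact: ltW.
apply: (@le_trans _ _ (\sum_k c ^+ 2 * (a k * lhat p z k))); last first.
  by rewrite -mulr_sumr ler_wpM2l ?sqr_ge0.
apply: ler_sum => k _; rewrite ehat_scale -mulrA.
apply: ler_wpM2r; first exact: mulr_ge0 (a0 k) (lhat_ge0 _ _ _ p_inj).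
exact/max_mul_sqr_le/ehat_le1.
Qed.

Lemma disp_obj_le_CX {bd p f E0 z a U1 U2 W} :
  vanish bd U1 -> vanish bd U2 -> vanish bd W ->
  ((disp_obj bd p f E0 z a U1 U2 W)%:E <= CX bd p f E0 z a)%E.
Proof. by move=> vU1 vU2 vW; apply: ereal_sup_ubound; exists U1, U2, W. Qed.

Lemma CX_le_stress_obj bd p f E0 z a (sh : edge nb -> R) :
  injective p -> 0 < E0 -> (forall k, 0 <= a k) -> stress_feas bd p f z sh ->
  (CX bd p f E0 z a <= stress_obj p E0 z a sh)%E.
Proof.
move=> p_inj E0_gt0 a0 feas; apply: ge_ereal_sup => _ [U1 [U2 [W [vU1 [vU2 [vW ->]]]]]].
exact: disp_obj_le_stress_obj.
Qed.

Lemma MCGS_solves_Cmin {bd p f E0 V0 z a} {v : \bar R} :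
  MCGS_feas bd p V0 z a -> CX bd p f E0 z a = v ->
  (forall z' a', MCGS_feas bd p V0 z' a' -> (v <= CX bd p f E0 z' a')%E) ->
  MCGS_solves bd p f E0 V0 z a /\ Cmin bd p f E0 V0 = v.
Proof.
move=> feas CXv CX_ge; split; first by split=> // z' a' /CX_ge; rewrite CXv.
apply/eqP; rewrite eq_le; apply/andP; split.
  by apply: ereal_inf_lbound; exists z, a.
by apply: le_ereal_inf_tmp => _ [z' [a' [feas' ->]]]; apply: CX_ge.
Qed.

End Shell.

Section OptimalDesign.
Context {R : realType} {nb : nat}.
Context {p : 'I_nb -> R * R} {bd : 'I_nb -> bool} {f : 'I_nb -> R} {E0 V0 : R}
  {s q r : edge nb -> R} {u1 u2 w : 'I_nb -> R}.
Hypotheses (p_inj : injective p) (E0_gt0 : 0 < E0) (V0_gt0 : 0 < V0)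
  (Z_gt0 : 0 < ZX bd p f) (primal_opt : PX_solves bd p f s q r)
  (dual_opt : PXd_solves bd p f u1 u2 w).

Local Notation Z := (ZX bd p f).
Local Notation z := (fun i => w i / 2).
Local Notation a := (fun k => V0 / Z * Jkk p z k * s k).
Local Notation c := (Z / (E0 * V0)).
Local Notation sh := (fun k => Jkk p z k * s k).
Local Notation el u := (fun i => c * u i).
Local Notation Cmin_val := (Z ^+ 2 / (2 * E0 * V0)).

Let lp k : 0 < len p k := len_gt0 p k p_inj.
Let ln0 k : len p k != 0 := lt0r_neq0 (lp k).

Lemma dual_value : loadw bd f w = Z.
Proof.
have [t1 [t2 [t3 [dfeas _]]]] := dual_opt; have [feas opt] := primal_opt.
have [s' [q' [r' [feas' obj']]]] := strong_duality p_inj dual_opt.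
rewrite (ZX_eq_obj primal_opt); apply/eqP; rewrite eq_le (weak_duality feas dfeas).
by rewrite -obj' (opt _ _ _ feas').
Qed.

Lemma complementary_slackness k :
  [/\ q k = s k * Dw w k / (2 * len p k),
      r k = s k * Dw w k ^+ 2 / (8 * len p k ^+ 2)
    & 0 < s k -> dual_slack p u1 u2 w k = 0].
Proof.
have [t1 [t2 [t3 [dfeas _]]]] := dual_opt; have [feas _] := primal_opt.
have [_ [_ [_ [_ [_ hKs]]]]] := feas.
have [_ [_ [_ [_ [_ [e2 [e3 [e1 hK]]]]]]]] := dfeas.
have dot0 := PX_obj_sub_loadw feas dfeas.
rewrite dual_value -(ZX_eq_obj primal_opt) subrr in dot0.
have := psumr_eq0P (fun k _ => inK_dot_ge0 (hKs k) (hK k)) (esym dot0) (i := k) isT.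
have t1_gt0 : 0 < t1 k by rewrite e1 mulr_gt0.
move=> /(inK_dot_eq0 (hKs k) (hK k) t1_gt0) [qE rE tE].
have t3E : t3 k = - Dw w k by apply/eqP; rewrite -subr_eq0 opprK e3.
rewrite e1 t3E in qE rE tE; split.
- by rewrite qE; field.
- by rewrite rE; field.
move=> /tE; rewrite /dual_slack sqrrN (_ : t2 k = len p k - Bu p u1 u2 k).
  by move=> ->; field.
by rewrite -(e2 k); ring.
Qed.

Lemma dual_slack_ge0 k : 0 <= dual_slack p u1 u2 w k.
Proof.
by have [t1 [t2 [t3 [dfeas _]]]] := dual_opt; exact: PXd_feas_slack_ge0 k p_inj dfeas.
Qed.

Lemma dual_vanish : [/\ vanish bd u1, vanish bd u2 & vanish bd w].
Proof. by have [t1 [t2 [t3 [[v1 [v2 [vw _]]] _]]]] := dual_opt. Qed.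

Lemma sum_s_len_Jkk : \sum_k s k * len p k * Jkk p z k ^+ 2 = Z.
Proof.
rewrite (ZX_eq_obj primal_opt) /PX_obj mulr_sumr -big_split; apply: eq_bigr => k _.
by have [_ rE _] := complementary_slackness k; rewrite Jkk_sqr Delta_half rE /=; field.
Qed.

Lemma a_eq0 k : (a k == 0) = (s k == 0).
Proof. by rewrite /= !mulf_eq0 invr_eq0 (gt_eqF V0_gt0) (gt_eqF Z_gt0)
  (gt_eqF (Jkk_gt0 _ _ _)). Qed.

Lemma volume_opt : \sum_k a k * lhat p z k = V0.
Proof.
transitivity (V0 / Z * \sum_k s k * len p k * Jkk p z k ^+ 2).
  by rewrite mulr_sumr; apply: eq_bigr => k _; rewrite /lhat; ring.
by rewrite sum_s_len_Jkk; field; rewrite gt_eqF.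
Qed.

Lemma MCGS_feas_opt : MCGS_feas bd p V0 z a.
Proof.
have [_ _ vw] := dual_vanish; have [[s0 _] _] := primal_opt.
split=> [i bi|]; first by rewrite vw // mul0r.
split=> [k|]; last by rewrite volume_opt.
exact: mulr_ge0 (mulr_ge0 (divr_ge0 (ltW V0_gt0) (ltW Z_gt0)) (ltW (Jkk_gt0 _ _ _))) (s0 k).
Qed.

Lemma ehat_el k : a k != 0 -> ehat p (el u1) (el u2) (el w) z k = c.
Proof.
rewrite a_eq0 => s_neq0; have [[s0 _] _] := primal_opt.
have sp : 0 < s k by rewrite lt_def s_neq0 s0.
have [_ _ /(_ sp)] := complementary_slackness k; rewrite /dual_slack => slack_eq.
have BuE : Bu p u1 u2 k = len p k - Dw w k ^+ 2 / (4 * len p k) by lra.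
rewrite ehat_scale /ehat /strain Delta_half /Delta BuE.
have -> : (len p k - Dw w k ^+ 2 / (4 * len p k)) / len p k
          + Dw w k / (2 * len p k) * (Dw w k / len p k)
          = 1 + (Dw w k / (2 * len p k)) ^+ 2 by field.
by rewrite divff ?mulr1 // gt_eqF // ltr_pwDl // sqr_ge0.
Qed.

Lemma stress_feas_opt : stress_feas bd p f z sh.
Proof.
have [[s0 [_ [hB1 [hB2 [hDT _]]]]] _] := primal_opt.
have J_neq0 k : Jkk p z k != 0 by rewrite gt_eqF ?Jkk_gt0.
split=> [k|/=]; first by rewrite mulr_ge0 ?s0 // ltW ?Jkk_gt0.
have -> : (fun k => Jkk p z k * s k / Jkk p z k) = s.
  by apply: funext => k; rewrite mulrC mulKf.
have -> : (fun k => Delta p z k * (Jkk p z k * s k) / Jkk p z k) = q.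
  apply: funext => k; have [-> _ _] := complementary_slackness k.
  by rewrite Delta_half; field; rewrite J_neq0 ln0.
by [].
Qed.

Lemma stress_obj_opt : stress_obj p E0 z a sh = Cmin_val%:E.
Proof.
rewrite /stress_obj
  (eq_bigr (fun k => (s k * len p k * Jkk p z k ^+ 2 * (Z / (2 * E0 * V0)))%:E)).
  by rewrite sumEFin -mulr_suml sum_s_len_Jkk; congr (_%:E); field; rewrite !gt_eqF.
move=> k _; rewrite /stress_term; have [a_eq|a_neq] := eqVneq (a k) 0.
  by move/eqP: (a_eq); rewrite a_eq0 => /eqP ->; rewrite mulr0 eqxx !mul0r.
have J0 := Jkk_gt0 p z k; rewrite /lhat; congr (_%:E).
by field; rewrite -a_eq0 a_neq !gt_eqF.
Qed.

Lemma disp_obj_el : disp_obj bd p f E0 z a (el u1) (el u2) (el w) = Cmin_val.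
Proof.
have c_gt0 : 0 < c by rewrite divr_gt0 ?mulr_gt0.
have energy : \sum_k Num.max (ehat p (el u1) (el u2) (el w) z k) 0 ^+ 2 * a k * lhat p z k
              = c ^+ 2 * V0.
  transitivity (c ^+ 2 * \sum_k a k * lhat p z k); last by rewrite volume_opt.
  rewrite mulr_sumr; apply: eq_bigr => k _.
  have [->|a_neq] := eqVneq (a k) 0; first by rewrite !(mul0r, mulr0).
  by rewrite ehat_el // max_l ?(ltW c_gt0) //; ring.
by rewrite /disp_obj loadw_scale dual_value energy; field; rewrite !gt_eqF.
Qed.

Lemma a_ge0 k : 0 <= a k.
Proof. by have [_ [a0 _]] := MCGS_feas_opt. Qed.

Lemma vanish_el {u} : vanish bd u -> vanish bd (el u).
Proof. by move=> vu i bi; rewrite vu // mulr0. Qed.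

Lemma CX_opt : CX bd p f E0 z a = Cmin_val%:E.
Proof.
have [v1 v2 vw] := dual_vanish; apply/eqP; rewrite eq_le; apply/andP; split.
  rewrite -stress_obj_opt; apply: CX_le_stress_obj => //.
  - exact: a_ge0.
  - exact: stress_feas_opt.
by rewrite -disp_obj_el; apply: disp_obj_le_CX; apply: vanish_el.
Qed.

Lemma Cmin_val_le_CX z' a' : MCGS_feas bd p V0 z' a' ->
  (Cmin_val%:E <= CX bd p f E0 z' a')%E.
Proof.
move=> feas'; have [v1 v2 vw] := dual_vanish.
apply: le_trans _ (disp_obj_le_CX
  (vanish_el v1) (vanish_el v2) (vanish_el vw)); rewrite lee_fin.
have c_ge0 : 0 <= c by rewrite divr_ge0 ?mulr_ge0 ?ltW.
apply: le_trans _ (disp_obj_scale_ge p_inj E0_gt0 c_ge0 dual_slack_ge0 feas').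
by rewrite dual_value le_eqVlt; apply/orP; left; apply/eqP; field; rewrite !gt_eqF.
Qed.

Lemma hooke_opt k : sh k = E0 * a k * ehat p (el u1) (el u2) (el w) z k.
Proof.
have [a_eq|a_neq] := eqVneq (a k) 0.
  by move/eqP: (a_eq); rewrite a_eq0 a_eq => /eqP ->; rewrite mulr0 mulr0 mul0r.
by rewrite ehat_el //; field; rewrite !gt_eqF.
Qed.

Lemma disp_solves_opt : disp_solves bd p f E0 z a (el u1) (el u2) (el w).
Proof.
have [v1 v2 vw] := dual_vanish.
split; [exact: vanish_el | split; [exact: vanish_el | split; first exact: vanish_el]].
move=> U1 U2 W vU1 vU2 vW; rewrite disp_obj_el -lee_fin -CX_opt.
exact: disp_obj_le_CX.
Qed.

Lemma stress_solves_opt : stress_solves bd p f E0 z a sh.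
Proof.
split=> [|sh' feas']; first exact: stress_feas_opt.
by rewrite stress_obj_opt -CX_opt CX_le_stress_obj //; exact: a_ge0.
Qed.

End OptimalDesign.

Theorem theorem6p3 (R : realType) (Omega : set (R * R)) (nb : nat)
  (p : 'I_nb -> R * R) (bd : 'I_nb -> bool) (f : 'I_nb -> R) (E0 V0 : R)
  (s q r : edge nb -> R) (u1 u2 w : 'I_nb -> R) :
  (* Omega is a bounded domain in R^2 *)
  open Omega -> connected Omega -> Omega !=set0 ->
  (exists M : R, forall x, Omega x -> `|x.1| <= M /\ `|x.2| <= M) ->
  (* X = p('I_nb) is a finite subset of the closure of Omega *)
  injective p -> (forall i, closure Omega (p i)) ->
  (* bd marks the points of X on the boundary of Omega *)
  (forall i, bd i <-> (closure Omega `\` interior Omega) (p i)) ->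
  (* X \ dOmega is in the interior of conv(X cap dOmega) *)
  (forall i, ~~ bd i -> interior (conv_pts bd p) (p i)) ->
  0 < E0 -> 0 < V0 -> 0 < ZX bd p f ->
  PX_solves bd p f s q r -> PXd_solves bd p f u1 u2 w ->
  let Z := ZX bd p f in
  let z := fun i => w i / 2 in
  let a := fun k => V0 / Z * Jkk p z k * s k in
  let c := Z / (E0 * V0) in
  let u1el := fun i => c * u1 i in
  let u2el := fun i => c * u2 i in
  let wel := fun i => c * w i in
  let sh := fun k => Jkk p z k * s k in
  MCGS_solves bd p f E0 V0 z a /\
  Cmin bd p f E0 V0 = (Z ^+ 2 / (2 * E0 * V0))%:E /\
  disp_solves bd p f E0 z a u1el u2el wel /\
  stress_solves bd p f E0 z a sh /\
  (forall k, a k != 0 -> ehat p u1el u2el wel z k = c) /\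
  (forall k, sh k = (E0 * a k) * ehat p u1el u2el wel z k).
Proof.
(* The geometric hypotheses on Omega and X only serve, in the paper, to
   guarantee that optimal solutions exist; here they are given, and the
   geometry enters only through injectivity of p (all bars have l_k > 0). *)
move=> _ _ _ _ p_inj _ _ _ E0_gt0 V0_gt0 Z_gt0 primal_opt dual_opt /=.
have [solves Cmin_eq] := MCGS_solves_Cmin
  (MCGS_feas_opt p_inj V0_gt0 Z_gt0 primal_opt dual_opt)
  (CX_opt p_inj E0_gt0 V0_gt0 Z_gt0 primal_opt dual_opt)
  (Cmin_val_le_CX p_inj E0_gt0 V0_gt0 Z_gt0 primal_opt dual_opt).
split=> //; split=> //.
split; first exact: disp_solves_opt p_inj E0_gt0 V0_gt0 Z_gt0 primal_opt dual_opt.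
split; first exact: stress_solves_opt p_inj E0_gt0 V0_gt0 Z_gt0 primal_opt dual_opt.
split=> k; first exact: (ehat_el p_inj V0_gt0 Z_gt0 primal_opt dual_opt k).
exact: (hooke_opt p_inj E0_gt0 V0_gt0 Z_gt0 primal_opt dual_opt k).
Qed.
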